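(* Let $\mathcal{U}\in\beta\mathbb{N}$ be idempotent. If $\mathbb{A}_{\mathcal{U}}$ contains some $\mu$ with $\mu\,\hat{}\,\mu=\mu$, then there exist $\mu_r\in\mathbb{A}_{\mathcal{U}}$ with $\mu_r\,\hat{}\,\mu_r=\mu_r$ and sets $E_r\subseteq\mathbb{T}$, for $r\in2^\omega$, such that $\mu_r(E_s)=1$ if $r=s$ and $\mu_r(E_s)=0$ otherwise. In particular, the set of idempotents in $\mathbb{A}_{\mathcal{U}}$ is either empty or not closed.
   Context: For $a,b\subseteq(0,1]$ put $a\,\hat{}\,b=\tfrac12 a\cup\tfrac12(b+1)$; $\mathbb{T}$ is the set generated from $\mathbf{1}=\{1\}$ by $\hat{}$ (free binary system on one generator), $\#(t)$ is the cardinality of $t$, $\mathbb{T}_n=\{t:\#(t)=n\}$, $\mathbb{A}_n$ is the set of probability measures on $\mathbb{T}_n$. $\Pr(\mathbb{T})$ is the set of finitely additive probability measures on $\mathbb{T}$, viewed as positive normalized functionals on $\ell^\infty(\mathbb{T})$ with the weak* topology; $\mathbb{A}_n\subseteq\Pr(\mathbb{T})$; $(\mu\,\hat{}\,\nu)(f)=\int\int f(x\,\hat{}\,y)\,d\nu(y)\,d\mu(x)$. $\mathcal{U}\in\beta\mathbb{N}$ is idempotent if $\mathcal{U}+\mathcal{U}=\mathcal{U}$ ($W\in\mathcal{U}+\mathcal{V}$ iff $\{m:\{n:m+n\in W\}\in\mathcal{V}\}\in\mathcal{U}$). $\mathbb{A}_{\mathcal{U}}$ is the set of $\mu\in\Pr(\mathbb{T})$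 such that for every weak*-open $W\ni\mu$, $\{m\in\mathbb{N}:W\cap\mathbb{A}_m\neq\emptyset\}\in\mathcal{U}$. An idempotent in $\mathbb{A}_{\mathcal{U}}$ is a $\mu$ with $\mu\,\hat{}\,\mu=\mu$. *)

From Stdlib Require Import Reals List.
Import ListNotations.
Open Scope R_scope.

(* The free binary system on one generator: binary trees.
   [Leaf] is the generator 1 = {1}; [Node a b] is a ^ b. *)
Inductive tree : Type := Leaf : tree | Node : tree -> tree -> tree.

Fixpoint card (t : tree) : nat :=
  match t with Leaf => 1%nat | Node a b => (card a + card b)%nat end.

Definition bounded (f : tree -> R) : Prop := exists M, forall t, Rabs (f t) <= M.

(* Pr(T): finitely additive probability measures = positive normalized
   linear functionals on l^infty(T) (only values on bounded f matter). *)
Definition is_mean (mu : (tree -> R) -> R) : Prop :=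
  (forall f g, bounded f -> bounded g -> mu (fun t => f t + g t) = mu f + mu g) /\
  (forall c f, bounded f -> mu (fun t => c * f t) = c * mu f) /\
  (forall f, bounded f -> (forall t, 0 <= f t) -> 0 <= mu f) /\
  mu (fun _ => 1) = 1.

Definition conv (mu nu : (tree -> R) -> R) : (tree -> R) -> R :=
  fun f => mu (fun x => nu (fun y => f (Node x y))).

Definition idem (mu : (tree -> R) -> R) : Prop :=
  is_mean mu /\ forall f, bounded f -> conv mu mu f = mu f.

Definition wopen (W : ((tree -> R) -> R) -> Prop) : Prop :=
  forall nu, is_mean nu -> W nu ->
    exists (fs : list (tree -> R)) (eps : R), 0 < eps /\ Forall bounded fs /\
      forall lam, is_mean lam ->
        (forall f, In f fs -> Rabs (lam f - nu f) < eps) -> W lam.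

Definition wclosed (C : ((tree -> R) -> R) -> Prop) : Prop :=
  wopen (fun nu => is_mean nu /\ ~ C nu).

Definition wsum (l : list (R * tree)) (f : tree -> R) : R :=
  fold_right (fun p acc => fst p * f (snd p) + acc) 0 l.

Definition in_A (n : nat) (nu : (tree -> R) -> R) : Prop :=
  exists l : list (R * tree),
    Forall (fun p => 0 <= fst p /\ card (snd p) = n) l /\
    wsum l (fun _ => 1) = 1 /\
    forall f, nu f = wsum l f.

Definition is_ultrafilter (U : (nat -> Prop) -> Prop) : Prop :=
  ~ U (fun _ => False) /\ U (fun _ => True) /\
  (forall A B, U A -> (forall n, A n -> B n) -> U B) /\
  (forall A B, U A -> U B -> U (fun n => A n /\ B n)) /\
  (forall A, U A \/ U (fun n => ~ A n)).

Definition uf_sum (U V : (nat -> Prop) -> Prop) : (nat -> Prop) -> Prop :=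
  fun W => U (fun m => V (fun n => W (m + n)%nat)).

Definition uf_idempotent (U : (nat -> Prop) -> Prop) : Prop :=
  forall W, uf_sum U U W <-> U W.

Definition in_AU (U : (nat -> Prop) -> Prop) (mu : (tree -> R) -> R) : Prop :=
  is_mean mu /\
  forall W, wopen W -> W mu ->
    U (fun m => exists nu, in_A m nu /\ W nu).

Definition indicator (E : tree -> bool) : tree -> R :=
  fun t => if E t then 1 else 0.

From Stdlib Require Import Reals List Lra Lia Classical ClassicalEpsilon FunctionalExtensionality PeanoNat.
(* Imported after Reals, whose own [bounded] would otherwise shadow the one of Defs. *)
From Pilot Require Import Defs.
Import ListNotations.
Open Scope R_scope.

(* For r : nat -> bool let phi_r be a cardinality-preserving self-map of T which is a
   homomorphism (phi_r (x ^ y) = phi_r x ^ phi_r y) whenever 2 <= #x < #y and #y avoids a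
   U-null set of cardinalities, and which otherwise writes out an initial segment of r in a tree of the
   right cardinality.  Since every mu in A_U lives on cardinalities in U, the pushforward
   mu_r of an idempotent mu along phi_r is again an idempotent of A_U, concentrated on the image
   E_r of phi_r; and for r <> s the images E_r, E_s share no tree of large cardinality, on
   which mu_r is null.
   For non-closedness take the U-limit nu of mu_{d_n}, d_n the indicator of {n}.  It lies in the
   closure of the idempotents of A_U, it gives measure 1 to the set F of trees x ^ y with x, y in a
   common (large part of) E_{d_n}, while every section {y | x ^ y in F} is nu-null; so nu ^ nu
   gives F measure 0 and nu is not idempotent. *)

Lemma Rabs_lt_iff (a e : R) : Rabs a < e <-> - e < a < e.
Proof. unfold Rabs; destruct (Rcase_abs a); split; intros; lra. Qed.

Lemma Rabs_le_iff (a e : R) : Rabs a <= e <-> - e <= a <= e.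
Proof. unfold Rabs; destruct (Rcase_abs a); split; intros; lra. Qed.

Lemma bounded_between (f : tree -> R) (a b : R) : (forall t, a <= f t <= b) -> bounded f.
Proof.
  intros H; exists (Rabs a + Rabs b); intros t; specialize (H t).
  apply Rabs_le_iff; unfold Rabs; destruct (Rcase_abs a), (Rcase_abs b); lra.
Qed.

Lemma bounded_const (c : R) : bounded (fun _ => c).
Proof. apply (bounded_between _ c c); intros; lra. Qed.

Lemma bounded_sub (f g : tree -> R) : bounded f -> bounded g -> bounded (fun t => f t - g t).
Proof.
  intros [M HM] [N HN]; exists (M + N); intros t.
  specialize (HM t); specialize (HN t); rewrite Rabs_le_iff in *; lra.
Qed.

Lemma bounded_scal (c : R) (f : tree -> R) : bounded f -> bounded (fun t => c * f t).
Proof.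
  intros [M HM]; exists (Rabs c * M); intros t.
  rewrite Rabs_mult; apply Rmult_le_compat_l; [apply Rabs_pos | apply HM].
Qed.

Lemma bounded_comp (f : tree -> R) (g : tree -> tree) : bounded f -> bounded (fun t => f (g t)).
Proof. intros [M HM]; exists M; intros t; apply HM. Qed.

Lemma indicator_between (E : tree -> bool) (t : tree) : 0 <= indicator E t <= 1.
Proof. unfold indicator; destruct (E t); lra. Qed.

Lemma bounded_indicator (E : tree -> bool) : bounded (indicator E).
Proof. apply (bounded_between _ 0 1), indicator_between. Qed.

Section Means.

Variable lam : (tree -> R) -> R.
Hypothesis hlam : is_mean lam.

Lemma mean_ext (f g : tree -> R) : (forall t, f t = g t) -> lam f = lam g.
Proof. intros H; f_equal; apply functional_extensionality, H. Qed.

Lemma mean_add (f g : tree -> R) :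
  bounded f -> bounded g -> lam (fun t => f t + g t) = lam f + lam g.
Proof. apply (proj1 hlam). Qed.

Lemma mean_scal (c : R) (f : tree -> R) : bounded f -> lam (fun t => c * f t) = c * lam f.
Proof. apply (proj1 (proj2 hlam)). Qed.

Lemma mean_nonneg (f : tree -> R) : bounded f -> (forall t, 0 <= f t) -> 0 <= lam f.
Proof. apply (proj1 (proj2 (proj2 hlam))). Qed.

Lemma mean_const (c : R) : lam (fun _ => c) = c.
Proof.
  rewrite (mean_ext _ (fun t => c * (fun _ => 1) t)) by (intros; ring).
  rewrite mean_scal by apply bounded_const.
  rewrite (proj2 (proj2 (proj2 hlam))); ring.
Qed.

Lemma mean_sub (f g : tree -> R) :
  bounded f -> bounded g -> lam (fun t => f t - g t) = lam f - lam g.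
Proof.
  intros Hf Hg.
  rewrite (mean_ext _ (fun t => f t + (-1) * g t)) by (intros; ring).
  rewrite mean_add, mean_scal; auto using bounded_scal; ring.
Qed.

Lemma mean_le (f g : tree -> R) :
  bounded f -> bounded g -> (forall t, f t <= g t) -> lam f <= lam g.
Proof.
  intros Hf Hg Hfg.
  assert (0 <= lam (fun t => g t - f t)).
  { apply mean_nonneg; [apply bounded_sub; auto |].
    intros t; specialize (Hfg t); lra. }
  rewrite mean_sub in H; auto; lra.
Qed.

Lemma mean_between (f : tree -> R) (a b : R) : (forall t, a <= f t <= b) -> a <= lam f <= b.
Proof.
  intros H; pose proof (bounded_between f a b H) as Hf.
  rewrite <- (mean_const a) at 1; rewrite <- (mean_const b).
  split; apply mean_le; auto using bounded_const; intros t; apply H.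
Qed.

Lemma bounded_mean_family (F : tree -> tree -> R) (M : R) :
  (forall x y, Rabs (F x y) <= M) -> bounded (fun x => lam (F x)).
Proof.
  intros HM; exists M; intros x; apply Rabs_le_iff, mean_between.
  intros y; apply Rabs_le_iff, HM.
Qed.

Lemma mean_eq_one_of_between (A : tree -> bool) (f : tree -> R) :
  lam (indicator A) = 1 -> (forall t, indicator A t <= f t <= 1) -> lam f = 1.
Proof.
  intros HA Hf.
  assert (Hf01 : forall t, 0 <= f t <= 1)
    by (intros t; pose proof (indicator_between A t); specialize (Hf t); lra).
  pose proof (mean_between f 0 1 Hf01).
  enough (lam (indicator A) <= lam f) by lra.
  apply mean_le; [apply bounded_indicator | apply (bounded_between f 0 1 Hf01) |].
  intros t; apply Hf.
Qed.

End Means.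

Lemma idem_square_full (lam : (tree -> R) -> R) (A P : tree -> bool) :
  idem lam -> lam (indicator A) = 1 ->
  (forall x y, A x = true -> A y = true -> P (Node x y) = true) ->
  lam (indicator P) = 1.
Proof.
  intros [Hm Hid] HA HP.
  rewrite <- (Hid _ (bounded_indicator P)); unfold conv.
  apply (mean_eq_one_of_between lam Hm A); [exact HA |]; intros x.
  assert (Hsec : 0 <= lam (fun y => indicator P (Node x y)) <= 1)
    by (apply mean_between; auto; intros y; apply indicator_between).
  unfold indicator at 1; destruct (A x) eqn:Ax; [| lra].
  enough (lam (fun y => indicator P (Node x y)) = 1) by lra.
  apply (mean_eq_one_of_between lam Hm A); [exact HA |]; intros y.
  unfold indicator; destruct (A y) eqn:Ay.
  - rewrite (HP x y Ax Ay); lra.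
  - destruct (P (Node x y)); lra.
Qed.

Definition pushforward (mu : (tree -> R) -> R) (g : tree -> tree) : (tree -> R) -> R :=
  fun f => mu (fun t => f (g t)).

Lemma is_mean_pushforward (mu : (tree -> R) -> R) (g : tree -> tree) :
  is_mean mu -> is_mean (pushforward mu g).
Proof.
  intros Hm; unfold pushforward; split; [| split; [| split]].
  - intros f h Hf Hh; apply (mean_add mu Hm); apply bounded_comp; auto.
  - intros c f Hf; apply (mean_scal mu Hm); apply bounded_comp; auto.
  - intros f Hf Hpos; apply (mean_nonneg mu Hm); auto; apply bounded_comp; auto.
  - apply (mean_const mu Hm).
Qed.

Lemma wopen_ball (h : tree -> R) (c eps : R) :
  bounded h -> wopen (fun lam => Rabs (lam h - c) < eps).
Proof.
  intros Hh nu _ Hnu.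
  exists [h], (eps - Rabs (nu h - c)); split; [lra | split; [constructor; auto |]].
  intros lam _ Hlam; specialize (Hlam h (or_introl eq_refl)).
  pose proof (Rabs_triang (lam h - nu h) (nu h - c)) as Htri.
  replace (lam h - nu h + (nu h - c)) with (lam h - c) in Htri by ring; lra.
Qed.

(** * Ultrafilters and ultrafilter limits *)

Section Ultrafilter.

Variable U : (nat -> Prop) -> Prop.
Hypothesis hU : is_ultrafilter U.

Lemma uf_true : U (fun _ => True).
Proof. apply hU. Qed.

Lemma uf_mono (A B : nat -> Prop) : U A -> (forall n, A n -> B n) -> U B.
Proof. apply hU. Qed.

Lemma uf_and (A B : nat -> Prop) : U A -> U B -> U (fun n => A n /\ B n).
Proof. apply hU. Qed.

Lemma uf_mono2 (A B C : nat -> Prop) : U A -> U B -> (forall n, A n -> B n -> C n) -> U C.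
Proof. intros HA HB H; apply (uf_mono _ _ (uf_and _ _ HA HB)); intros n []; auto. Qed.

Lemma uf_cases (A : nat -> Prop) : U A \/ U (fun n => ~ A n).
Proof. apply hU. Qed.

Lemma uf_nonempty (A : nat -> Prop) : U A -> exists n, A n.
Proof.
  intros HA; apply NNPP; intros Hno; apply (proj1 hU).
  apply (uf_mono _ _ HA); intros n Hn; apply Hno; eauto.
Qed.

Lemma uf_forall_list {X : Type} (l : list X) (P : X -> nat -> Prop) :
  (forall x, In x l -> U (P x)) -> U (fun n => forall x, In x l -> P x n).
Proof.
  induction l as [| x l IH]; intros Hl.
  - apply (uf_mono _ _ uf_true); intros n _ x [].
  - apply (uf_mono2 _ _ _ (Hl x (or_introl eq_refl)) (IH (fun y Hy => Hl y (or_intror Hy)))).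
    intros n Hx Hrest y [<- | Hy]; auto.
Qed.

Lemma uf_principal_of_bounded (k : nat) : U (fun n => (n <= k)%nat) -> exists j, U (fun n => n = j).
Proof.
  induction k as [| k IH]; intros Hk.
  - exists 0%nat; apply (uf_mono _ _ Hk); intros; lia.
  - destruct (uf_cases (fun n => n = S k)) as [Hj | Hj]; [eauto |].
    apply IH, (uf_mono2 _ _ _ Hk Hj); intros; lia.
Qed.

Section Idempotent.

Hypothesis hpos : U (fun n => (0 < n)%nat).
Hypothesis hidem : uf_idempotent U.

(* A principal idempotent ultrafilter sits at 0, which [hpos] excludes. *)
Lemma uf_tail (k : nat) : U (fun n => (k < n)%nat).
Proof.
  destruct (uf_cases (fun n => (k < n)%nat)) as [Hk | Hk]; [exact Hk | exfalso].
  destruct (uf_principal_of_bounded k) as [j Hj]; [apply (uf_mono _ _ Hk); intros; lia |].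
  pose proof (proj2 (hidem _) Hj) as Hjj; unfold uf_sum in Hjj.
  destruct (uf_nonempty _ (uf_and _ _ Hjj Hj)) as [m [Hm ->]].
  destruct (uf_nonempty _ (uf_and _ _ Hm Hj)) as [n [Hn ->]].
  destruct (uf_nonempty _ (uf_and _ _ hpos Hj)) as [n' [Hn' ->]]; lia.
Qed.

End Idempotent.

Definition uf_converges (a : nat -> R) (c : R) : Prop :=
  forall eps, 0 < eps -> U (fun n => Rabs (a n - c) < eps).

(* 0 when there is no limit. *)
Definition uf_lim (a : nat -> R) : R :=
  match excluded_middle_informative (exists c, uf_converges a c) with
  | left H => proj1_sig (constructive_indefinite_description _ H)
  | right _ => 0
  end.

Lemma uf_converges_unique (a : nat -> R) (c d : R) :
  uf_converges a c -> uf_converges a d -> c = d.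
Proof.
  intros Hc Hd; apply NNPP; intros Hne.
  set (e := Rabs (c - d) / 2).
  assert (He : 0 < e) by (unfold e; pose proof (Rabs_pos_lt (c - d)); lra).
  destruct (uf_nonempty _ (uf_and _ _ (Hc e He) (Hd e He))) as [n [Hn1 Hn2]].
  assert (Rabs (c - d) < 2 * e) by (rewrite Rabs_lt_iff in *; lra).
  unfold e in *; lra.
Qed.

Lemma uf_lim_eq (a : nat -> R) (c : R) : uf_converges a c -> uf_lim a = c.
Proof.
  intros Hc; unfold uf_lim; destruct excluded_middle_informative as [H | H]; [| exfalso; eauto].
  apply (uf_converges_unique a); [apply proj2_sig | exact Hc].
Qed.

Lemma uf_converges_of_bounded (a : nat -> R) (M : R) :
  (forall n, Rabs (a n) <= M) -> exists c, uf_converges a c.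
Proof.
  intros HM; set (S := fun c => U (fun n => c <= a n)).
  assert (Sb : bound S).
  { exists M; intros c Hc; destruct (uf_nonempty _ Hc) as [n Hn].
    specialize (HM n); rewrite Rabs_le_iff in HM; lra. }
  assert (Sne : exists x, S x).
  { exists (- M); apply (uf_mono _ _ uf_true); intros n _.
    specialize (HM n); rewrite Rabs_le_iff in HM; lra. }
  destruct (completeness S Sb Sne) as [L [Lub Lleast]].
  exists L; intros eps He.
  assert (Habove : U (fun n => a n < L + eps)).
  { destruct (uf_cases (fun n => L + eps <= a n)) as [H | H].
    - specialize (Lub (L + eps) H); lra.
    - apply (uf_mono _ _ H); intros; lra. }
  assert (Hbelow : exists c, S c /\ L - eps < c).
  { apply NNPP; intros Hno.
    enough (L <= L - eps) by lra.
    apply Lleast; intros c Hc; apply Rnot_lt_le; intros Hlt; eauto. }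
  destruct Hbelow as [c [Sc Hc]].
  apply (uf_mono2 _ _ _ Habove Sc); intros; apply Rabs_lt_iff; lra.
Qed.

Lemma uf_converges_ext (a b : nat -> R) (c : R) :
  (forall n, a n = b n) -> uf_converges b c -> uf_converges a c.
Proof. intros Hab Hb eps He; apply (uf_mono _ _ (Hb eps He)); intros n; rewrite Hab; auto. Qed.

Lemma uf_converges_eventually (a : nat -> R) (c : R) : U (fun n => a n = c) -> uf_converges a c.
Proof.
  intros Ha eps He; apply (uf_mono _ _ Ha); intros n ->.
  rewrite Rminus_diag, Rabs_R0; auto.
Qed.

Lemma uf_converges_add (a b : nat -> R) (c d : R) :
  uf_converges a c -> uf_converges b d -> uf_converges (fun n => a n + b n) (c + d).
Proof.
  intros Ha Hb eps He.
  apply (uf_mono2 _ _ _ (Ha (eps / 2) ltac:(lra)) (Hb (eps / 2) ltac:(lra))).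
  intros n; rewrite !Rabs_lt_iff; lra.
Qed.

Lemma uf_converges_scal (a : nat -> R) (c k : R) :
  uf_converges a c -> uf_converges (fun n => k * a n) (k * c).
Proof.
  intros Ha eps He.
  assert (Hk : 0 < Rabs k + 1) by (pose proof (Rabs_pos k); lra).
  apply (uf_mono _ _ (Ha (eps / (Rabs k + 1)) ltac:(apply Rdiv_lt_0_compat; lra))).
  intros n Hn.
  replace (k * a n - k * c) with (k * (a n - c)) by ring; rewrite Rabs_mult.
  apply (Rle_lt_trans _ ((Rabs k + 1) * Rabs (a n - c))).
  - apply Rmult_le_compat_r; [apply Rabs_pos | lra].
  - apply (Rmult_lt_compat_l (Rabs k + 1)) in Hn; auto.
    replace ((Rabs k + 1) * (eps / (Rabs k + 1))) with eps in Hn by (field; lra); exact Hn.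
Qed.

Lemma uf_converges_nonneg (a : nat -> R) (c : R) :
  (forall n, 0 <= a n) -> uf_converges a c -> 0 <= c.
Proof.
  intros Ha Hc; apply Rnot_lt_le; intros Hneg.
  destruct (uf_nonempty _ (Hc (- c) ltac:(lra))) as [n Hn].
  specialize (Ha n); rewrite Rabs_lt_iff in Hn; lra.
Qed.

Definition mean_ulim (M : nat -> (tree -> R) -> R) : (tree -> R) -> R :=
  fun f => uf_lim (fun n => M n f).

Section MeanLimit.

Variable M : nat -> (tree -> R) -> R.
Hypothesis hM : forall n, is_mean (M n).

Lemma uf_converges_mean_ulim (f : tree -> R) :
  bounded f -> uf_converges (fun n => M n f) (mean_ulim M f).
Proof.
  intros [B HB]; unfold mean_ulim, uf_lim.
  destruct excluded_middle_informative as [H | H]; [apply proj2_sig |].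
  exfalso; apply H, (uf_converges_of_bounded _ B); intros n.
  apply Rabs_le_iff, (mean_between _ (hM n)); intros t; apply Rabs_le_iff, HB.
Qed.

Lemma is_mean_mean_ulim : is_mean (mean_ulim M).
Proof.
  split; [| split; [| split]].
  - intros f g Hf Hg; apply uf_lim_eq.
    apply (uf_converges_ext _ (fun n => M n f + M n g)); [intros n; apply mean_add; auto |].
    apply uf_converges_add; apply uf_converges_mean_ulim; auto.
  - intros c f Hf; apply uf_lim_eq.
    apply (uf_converges_ext _ (fun n => c * M n f)); [intros n; apply mean_scal; auto |].
    apply uf_converges_scal, uf_converges_mean_ulim; auto.
  - intros f Hf Hpos; apply (uf_converges_nonneg (fun n => M n f)).
    + intros n; apply mean_nonneg; auto.
    + apply uf_converges_mean_ulim; auto.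
  - apply uf_lim_eq, uf_converges_eventually.
    apply (uf_mono _ _ uf_true); intros n _; apply mean_const; auto.
Qed.

Lemma wclosed_mean_ulim (C : ((tree -> R) -> R) -> Prop) :
  wclosed C -> (forall n, C (M n)) -> C (mean_ulim M).
Proof.
  intros Hcl HC; apply NNPP; intros HnC.
  destruct (Hcl _ is_mean_mean_ulim (conj is_mean_mean_ulim HnC)) as [fs [eps [He [Hfs Hnear]]]].
  assert (Hclose : U (fun n => forall f, In f fs -> Rabs (M n f - mean_ulim M f) < eps)).
  { apply (uf_forall_list fs (fun f n => Rabs (M n f - mean_ulim M f) < eps)).
    intros f Hf; apply uf_converges_mean_ulim; auto.
    rewrite Forall_forall in Hfs; auto. }
  destruct (uf_nonempty _ Hclose) as [n Hn].
  destruct (Hnear (M n) (hM n) Hn) as [_ Hn']; auto.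
Qed.

End MeanLimit.

End Ultrafilter.

(** * Means in A_U *)

Lemma wsum_zero_on_card (l : list (R * tree)) (h : tree -> R) (m : nat) :
  Forall (fun p => 0 <= fst p /\ card (snd p) = m) l ->
  (forall t, card t = m -> h t = 0) -> wsum l h = 0.
Proof.
  intros Hl Hh; induction Hl as [| p l [_ Hp] _ IH]; simpl; auto.
  rewrite IH, (Hh _ Hp); ring.
Qed.

(* Means in A_m with m in P vanish on f - g, and U-many of them approximate mu. *)
Lemma in_AU_eq_on_cards (U : (nat -> Prop) -> Prop) (mu : (tree -> R) -> R)
    (P : nat -> Prop) (f g : tree -> R) :
  is_ultrafilter U -> in_AU U mu -> U P -> bounded f -> bounded g ->
  (forall t, P (card t) -> f t = g t) -> mu f = mu g.
Proof.
  intros hU [Hm HA] HP Hf Hg Hfg.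
  set (h := fun t => f t - g t).
  assert (Hh : bounded h) by (apply bounded_sub; auto).
  enough (mu h = 0) by (unfold h in *; rewrite mean_sub in H; auto; lra).
  apply NNPP; intros Hne.
  assert (Hpos : 0 < Rabs (mu h)) by (apply Rabs_pos_lt; auto).
  assert (Hball : Rabs (mu h - mu h) < Rabs (mu h)) by (rewrite Rminus_diag, Rabs_R0; auto).
  specialize (HA _ (wopen_ball h (mu h) (Rabs (mu h)) Hh) Hball).
  destruct (uf_nonempty U hU _ (uf_and U hU _ _ HA HP)) as [m [[nu [[l [Hl [_ Hnu]]] Hnear]] Pm]].
  rewrite Hnu, (wsum_zero_on_card l h m Hl) in Hnear.
  - rewrite Rminus_0_l, Rabs_Ropp in Hnear; lra.
  - intros t <-; unfold h; rewrite Hfg; auto; ring.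
Qed.

Lemma wsum_map (l : list (R * tree)) (f : tree -> R) (g : tree -> tree) :
  wsum (map (fun p => (fst p, g (snd p))) l) f = wsum l (fun t => f (g t)).
Proof. induction l as [| p l IH]; simpl; auto; rewrite IH; auto. Qed.

Lemma in_A_pushforward (m : nat) (nu : (tree -> R) -> R) (g : tree -> tree) :
  (forall t, card (g t) = card t) -> in_A m nu -> in_A m (pushforward nu g).
Proof.
  intros Hg [l [Hl [Hsum Hnu]]].
  exists (map (fun p => (fst p, g (snd p))) l); split; [| split].
  - rewrite Forall_map; eapply Forall_impl; [| exact Hl].
    intros [w t]; simpl; rewrite Hg; auto.
  - rewrite wsum_map; auto.
  - intros f; unfold pushforward; rewrite wsum_map; apply Hnu.
Qed.

Lemma in_AU_pushforward (U : (nat -> Prop) -> Prop) (mu : (tree -> R) -> R) (g : tree -> tree) :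
  is_ultrafilter U -> (forall t, card (g t) = card t) -> in_AU U mu -> in_AU U (pushforward mu g).
Proof.
  intros hU Hg [Hm HA]; split; [apply is_mean_pushforward; auto |].
  intros W HW HWmu.
  set (W' := fun lam => W (pushforward lam g)).
  assert (HW' : wopen W').
  { intros nu Hnu HWnu.
    destruct (HW _ (is_mean_pushforward nu g Hnu) HWnu) as [fs [eps [He [Hfs Hnear]]]].
    exists (map (fun f t => f (g t)) fs), eps; split; [exact He | split].
    - rewrite Forall_map; eapply Forall_impl; [| exact Hfs]; intros f; apply bounded_comp.
    - intros lam Hlam Hclose; apply Hnear; [apply is_mean_pushforward; auto |].
      intros f Hf; apply (Hclose (fun t => f (g t))), (in_map (fun f t => f (g t))); auto. }
  apply (uf_mono U hU _ _ (HA W' HW' HWmu)).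
  intros n [nu [Hnu HWnu]]; exists (pushforward nu g); split; auto.
  apply in_A_pushforward; auto.
Qed.

Lemma idem_pushforward (U : (nat -> Prop) -> Prop) (mu : (tree -> R) -> R) (g : tree -> tree) :
  is_ultrafilter U -> in_AU U mu -> idem mu ->
  U (fun m => U (fun n => forall x y, card x = m -> card y = n ->
                            g (Node x y) = Node (g x) (g y))) ->
  idem (pushforward mu g).
Proof.
  intros hU HA [Hm Hid] Hhom; split; [apply is_mean_pushforward; auto |].
  intros f Hf; unfold conv, pushforward.
  rewrite <- (Hid _ (bounded_comp f g Hf)); unfold conv.
  destruct Hf as [B HB].
  apply (in_AU_eq_on_cards U mu _ _ _ hU HA Hhom);
    try (apply (bounded_mean_family mu Hm _ B); intros; apply HB).
  intros x Hx.
  apply (in_AU_eq_on_cards U mu _ _ _ hU HA Hx); try (exists B; intros; apply HB).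
  intros y Hy; rewrite (Hy x y); reflexivity.
Qed.

(** * Coding bit sequences into trees *)

(* [spine r (k + 2)] records the bit [r k] by the side on which its left-over leaf hangs. *)
Fixpoint spine (r : nat -> bool) (n : nat) : tree :=
  match n with
  | O => Leaf
  | S O => Node Leaf Leaf
  | S (S k as n') => if r k then Node Leaf (spine r n') else Node (spine r n') Leaf
  end.

Definition tag (r : nat -> bool) (N : nat) : tree := Node Leaf (spine r (N - 2)).

(* The blocks of parity p are the dyadic ranges [2^(2k+4+p), 2^(2k+5+p)); the offset 4 makes
   a tag of cardinality at least 2^(2k+5) long enough to record the bit k. *)
Definition in_block (p n : nat) : bool :=
  (4 + p <=? Nat.log2 n)%nat && Nat.even (Nat.log2 n - (4 + p)).

Definition block_index (p n : nat) : nat := Nat.div2 (Nat.log2 n - (4 + p)).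

Definition kept (p : nat) (r : nat -> bool) (m n : nat) : bool :=
  (2 <=? m)%nat && (m <? n)%nat && negb (in_block p n && r (block_index p n)).

(* A tag has a leaf as left child, so it never coincides with the image of a kept node. *)
Fixpoint recode (p : nat) (r : nat -> bool) (t : tree) : tree :=
  match t with
  | Leaf => Leaf
  | Node x y =>
      if kept p r (card x) (card y) then Node (recode p r x) (recode p r y)
      else tag r (card x + card y)
  end.

Definition image_of (g : tree -> tree) (t : tree) : bool :=
  if excluded_middle_informative (exists u, g u = t) then true else false.

Lemma card_pos (t : tree) : (1 <= card t)%nat.
Proof. induction t; simpl; lia. Qed.

Lemma card_spine (r : nat -> bool) (n : nat) : card (spine r n) = S n.
Proof.
  induction n as [| [| n] IH]; simpl; auto.
  simpl in IH; destruct (r n); simpl; rewrite IH; lia.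
Qed.

Lemma card_recode (p : nat) (r : nat -> bool) (t : tree) : card (recode p r t) = card t.
Proof.
  induction t as [| x IHx y IHy]; simpl; auto.
  destruct (kept p r (card x) (card y)); simpl; [lia |].
  rewrite card_spine; pose proof (card_pos x); pose proof (card_pos y); lia.
Qed.

Lemma kept_left_card (p : nat) (r : nat -> bool) (m n : nat) : kept p r m n = true -> (2 <= m)%nat.
Proof. unfold kept; intros H; repeat apply andb_prop in H as [H _]; apply Nat.leb_le, H. Qed.

Lemma spine_inj (r s : nat -> bool) (n : nat) :
  spine r n = spine s n -> forall k, (k + 2 <= n)%nat -> r k = s k.
Proof.
  induction n as [| [| n] IH]; intros Heq k Hk; try lia.
  assert (Hnleaf : forall q, Leaf <> spine q (S n))
    by (intros q E; apply (f_equal card) in E; rewrite card_spine in E; simpl in E; lia).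
  simpl in Heq; fold (spine r (S n)) (spine s (S n)) in Heq.
  destruct (Nat.eq_dec k n) as [-> | Hne].
  - destruct (r n), (s n); auto; injection Heq; intros; exfalso; eapply Hnleaf; eauto.
  - apply IH; [| lia].
    destruct (r n), (s n); injection Heq; intros; auto; exfalso; eapply Hnleaf; eauto.
Qed.

Lemma log2_block (p k n : nat) :
  (2 ^ (2 * k + 4 + p) <= n < 2 ^ (2 * k + 5 + p))%nat ->
  in_block p n = true /\ block_index p n = k.
Proof.
  intros Hn.
  assert (Hlog : Nat.log2 n = (2 * k + 4 + p)%nat).
  { apply Nat.log2_unique; [lia |].
    replace (S (2 * k + 4 + p)) with (2 * k + 5 + p)%nat by lia; lia. }
  unfold in_block, block_index; rewrite Hlog.
  replace (2 * k + 4 + p - (4 + p))%nat with (2 * k)%nat by lia.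
  rewrite Nat.div2_double; split; auto.
  apply andb_true_intro; split; [apply Nat.leb_le; lia | apply Nat.even_spec; exists k; lia].
Qed.

Lemma in_block_parities (n : nat) : in_block 0 n = true -> in_block 1 n = true -> False.
Proof.
  unfold in_block; intros H0 H1.
  apply andb_prop in H0 as [A0 B0]; apply andb_prop in H1 as [A1 B1].
  apply Nat.leb_le in A0; apply Nat.leb_le in A1.
  apply Nat.even_spec in B0 as [a Ha]; apply Nat.even_spec in B1 as [b Hb]; simpl in *; lia.
Qed.

(* Following a common image down the right spine, one meets either a block node where exactly one
   of r, s is not a homomorphism, or two tags, which differ at bit k. *)
Lemma recode_images_disjoint (p : nat) (r s : nat -> bool) (k : nat) (u v : tree) :
  r k <> s k -> (2 ^ (2 * k + 5 + p) <= card u)%nat -> recode p r u = recode p s v -> False.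
Proof.
  intros Hrs; revert v.
  assert (Hbig : (2 * k + 5 + p < 2 ^ (2 * k + 5 + p))%nat) by (apply Nat.pow_gt_lin_r; lia).
  induction u as [| a _ b IHb]; intros v Hu Heq; [cbn [card] in Hu; lia |].
  assert (Hcard : card (Node a b) = card v)
    by (rewrite <- (card_recode p r), <- (card_recode p s v); congruence).
  destruct v as [| c d]; [simpl in Hcard; pose proof (card_pos a); pose proof (card_pos b); lia |].
  cbn [card] in Hu, Hcard; cbn [recode] in Heq.
  destruct (kept p r (card a) (card b)) eqn:Kr, (kept p s (card c) (card d)) eqn:Ks.
  - injection Heq as _ Hbd.
    assert (Hcbd : card b = card d)
      by (apply (f_equal card) in Hbd; rewrite !card_recode in Hbd; exact Hbd).
    destruct (Nat.le_gt_cases (2 ^ (2 * k + 5 + p)) (card b)) as [Hb | Hb]; [eapply IHb; eauto |].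
    assert (Hab : (card a < card b)%nat)
      by (unfold kept in Kr; apply andb_prop in Kr as [Kr _]; apply andb_prop in Kr as [_ Kr];
          apply Nat.ltb_lt, Kr).
    assert (Hpow : (2 ^ (2 * k + 5 + p) = 2 * 2 ^ (2 * k + 4 + p))%nat)
      by (replace (2 * k + 5 + p)%nat with (S (2 * k + 4 + p)) by lia; apply Nat.pow_succ_r').
    destruct (log2_block p k (card b)) as [Hblk Hidx]; [lia |].
    unfold kept in Kr, Ks; rewrite <- Hcbd, Hblk, Hidx in Ks; rewrite Hblk, Hidx in Kr.
    apply andb_prop in Kr as [_ Kr]; apply andb_prop in Ks as [_ Ks].
    destruct (r k), (s k); simpl in *; congruence.
  - injection Heq as Ha _; apply (f_equal card) in Ha; rewrite card_recode in Ha.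
    apply kept_left_card in Kr; simpl in Ha; lia.
  - injection Heq as Hc _; apply (f_equal card) in Hc; rewrite card_recode in Hc.
    apply kept_left_card in Ks; simpl in Hc; lia.
  - injection Heq as Hsp; rewrite <- Hcard in Hsp.
    apply Hrs, (spine_inj r s _ Hsp); lia.
Qed.

Lemma exists_bit_neq (r s : nat -> bool) : r <> s -> exists k, r k <> s k.
Proof. intros Hrs; apply not_all_ex_not; intros H; apply Hrs, functional_extensionality, H. Qed.

Definition singleton_seq (n : nat) : nat -> bool := fun i => Nat.eqb i n.

Section Construction.

Variable U : (nat -> Prop) -> Prop.
Hypothesis hU : is_ultrafilter U.
Hypothesis hpos : U (fun n => (0 < n)%nat).
Hypothesis hidem : uf_idempotent U.

Definition parity : nat :=
  if excluded_middle_informative (U (fun n => in_block 0 n = true)) then 1%nat else 0%nat.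

Lemma parity_le_1 : (parity <= 1)%nat.
Proof. unfold parity; destruct excluded_middle_informative; lia. Qed.

Lemma uf_avoids_blocks : U (fun n => in_block parity n = false).
Proof.
  unfold parity; destruct excluded_middle_informative as [H0 | H0].
  - destruct (uf_cases U hU (fun n => in_block 1 n = false)) as [H1 | H1]; [exact H1 | exfalso].
    destruct (uf_nonempty U hU _ (uf_and U hU _ _ H0 H1)) as [n [B0 B1]].
    apply B1; destruct (in_block 1 n) eqn:E; [exfalso; apply (in_block_parities n) |]; auto.
  - destruct (uf_cases U hU (fun n => in_block 0 n = true)) as [H1 | H1]; [contradiction |].
    apply (uf_mono U hU _ _ H1); intros n; destruct (in_block 0 n); tauto.
Qed.

Lemma uf_kept (r : nat -> bool) (m : nat) : (2 <= m)%nat -> U (fun n => kept parity r m n = true).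
Proof.
  intros Hm; apply (uf_mono2 U hU _ _ _ (uf_tail U hU hpos hidem m) uf_avoids_blocks).
  intros n Hmn Hblk; unfold kept; rewrite Hblk.
  apply Nat.leb_le in Hm; apply Nat.ltb_lt in Hmn; rewrite Hm, Hmn; reflexivity.
Qed.

Lemma recode_hom_eventually (r : nat -> bool) :
  U (fun m => U (fun n => forall x y, card x = m -> card y = n ->
                  recode parity r (Node x y) = Node (recode parity r x) (recode parity r y))).
Proof.
  apply (uf_mono U hU _ _ (uf_tail U hU hpos hidem 1)); intros m Hm.
  apply (uf_mono U hU _ _ (uf_kept r m ltac:(lia))); intros n Hkept x y <- <-.
  simpl; rewrite Hkept; reflexivity.
Qed.

Variable mu : (tree -> R) -> R.
Hypothesis hmu : in_AU U mu.
Hypothesis hmu_idem : idem mu.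

Definition coded_mean (r : nat -> bool) : (tree -> R) -> R := pushforward mu (recode parity r).

Definition coded_set (r : nat -> bool) : tree -> bool := image_of (recode parity r).

Lemma coded_mean_in_AU_idem (r : nat -> bool) : in_AU U (coded_mean r) /\ idem (coded_mean r).
Proof.
  split.
  - apply in_AU_pushforward; auto; apply card_recode.
  - apply (idem_pushforward U); auto; apply recode_hom_eventually.
Qed.

Lemma coded_mean_full (r : nat -> bool) : coded_mean r (indicator (coded_set r)) = 1.
Proof.
  unfold coded_mean, pushforward.
  rewrite (mean_ext mu _ (fun _ => 1)); [apply (mean_const mu (proj1 hmu)) |].
  intros t; unfold indicator, coded_set, image_of.
  destruct excluded_middle_informative as [_ | Hno]; [| exfalso; eauto]; reflexivity.
Qed.

Lemma coded_mean_null (r s : nat -> bool) : r <> s -> coded_mean r (indicator (coded_set s)) = 0.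
Proof.
  intros Hrs; destruct (exists_bit_neq r s Hrs) as [k Hk].
  unfold coded_mean, pushforward.
  transitivity (mu (fun _ => 0)); [| apply (mean_const mu (proj1 hmu))].
  apply (in_AU_eq_on_cards U mu (fun n => 2 ^ (2 * k + 5 + parity) < n)%nat);
    auto using bounded_const, bounded_comp, bounded_indicator;
    [exact (uf_tail U hU hpos hidem _) |].
  intros t Ht; unfold indicator, coded_set, image_of.
  destruct excluded_middle_informative as [[v Hv] | _]; [exfalso | reflexivity].
  apply (recode_images_disjoint parity r s k t v Hk); [lia | auto].
Qed.

(* 2^(2n+6) bounds 2^(2n+5+parity), the threshold of [recode_images_disjoint] at bit n. *)
Definition large_coded (n : nat) (t : tree) : bool :=
  coded_set (singleton_seq n) t && (2 ^ (2 * n + 6) <=? card t)%nat.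

Definition diagonal_pairs (t : tree) : bool :=
  match t with
  | Leaf => false
  | Node x y =>
      if excluded_middle_informative (exists n, large_coded n x = true /\ large_coded n y = true)
      then true else false
  end.

Lemma large_coded_unique (n m : nat) (t : tree) :
  large_coded n t = true -> large_coded m t = true -> n = m.
Proof.
  assert (Hlt : forall n m, (n < m)%nat -> large_coded n t = true -> large_coded m t = true -> False).
  { clear n m; intros n m Hnm Hn Hm.
    unfold large_coded, coded_set, image_of in Hn, Hm.
    destruct (excluded_middle_informative (exists u, recode parity (singleton_seq n) u = t))
      as [[u Hu] | _]; [| discriminate].
    destruct (excluded_middle_informative (exists v, recode parity (singleton_seq m) v = t))
      as [[v Hv] | _]; [| discriminate].
    apply Nat.leb_le in Hm.
    apply (recode_images_disjoint parity (singleton_seq n) (singleton_seq m) n u v).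
    - unfold singleton_seq; rewrite Nat.eqb_refl; destruct (Nat.eqb_spec n m); [lia | discriminate].
    - rewrite <- (card_recode parity (singleton_seq n) u), Hu.
      pose proof parity_le_1.
      enough (2 ^ (2 * n + 5 + parity) <= 2 ^ (2 * m + 6))%nat by lia.
      apply Nat.pow_le_mono_r; lia.
    - congruence. }
  intros Hn Hm; destruct (Nat.lt_trichotomy n m) as [H | [H | H]]; eauto; exfalso; eauto.
Qed.

Lemma coded_mean_large_coded (n : nat) :
  coded_mean (singleton_seq n) (indicator (large_coded n)) = 1.
Proof.
  unfold coded_mean, pushforward.
  transitivity (mu (fun _ => 1)); [| apply (mean_const mu (proj1 hmu))].
  apply (in_AU_eq_on_cards U mu (fun k => 2 ^ (2 * n + 6) < k)%nat);
    auto using bounded_const, bounded_comp, bounded_indicator;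
    [exact (uf_tail U hU hpos hidem _) |].
  intros t Ht; unfold indicator, large_coded, coded_set, image_of.
  rewrite card_recode; destruct excluded_middle_informative as [_ | Hno]; [| exfalso; eauto].
  replace (2 ^ (2 * n + 6) <=? card t)%nat with true by (symmetry; apply Nat.leb_le; lia).
  reflexivity.
Qed.

Lemma coded_mean_large_coded_other (m n : nat) :
  m <> n -> coded_mean (singleton_seq m) (indicator (large_coded n)) = 0.
Proof.
  intros Hmn; pose proof (proj1 (proj1 (coded_mean_in_AU_idem (singleton_seq m)))) as Hm.
  apply Rle_antisym.
  - rewrite <- (coded_mean_null (singleton_seq m) (singleton_seq n)).
    + apply mean_le; auto using bounded_indicator; intros t.
      unfold indicator, large_coded; destruct (coded_set _ t); simpl; [destruct (_ <=? _)%nat |]; lra.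
    + intros E; apply (f_equal (fun q => q m)) in E; unfold singleton_seq in E.
      rewrite Nat.eqb_refl in E; symmetry in E; apply Nat.eqb_eq in E; auto.
  - apply mean_nonneg; auto using bounded_indicator; intros t; apply indicator_between.
Qed.

Definition coded_limit : (tree -> R) -> R := mean_ulim U (fun n => coded_mean (singleton_seq n)).

Lemma is_mean_coded_limit : is_mean coded_limit.
Proof. apply is_mean_mean_ulim; auto; intros n; apply coded_mean_in_AU_idem. Qed.

Lemma coded_limit_diagonal : coded_limit (indicator diagonal_pairs) = 1.
Proof.
  apply uf_lim_eq; auto; apply uf_converges_eventually; auto.
  apply (uf_mono U hU _ _ (uf_true U hU)); intros n _.
  apply (idem_square_full _ (large_coded n)); auto using coded_mean_large_coded.
  - apply coded_mean_in_AU_idem.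
  - intros x y Hx Hy; simpl; destruct excluded_middle_informative as [_ | Hno]; eauto.
Qed.

Lemma coded_limit_section_null (x : tree) :
  coded_limit (fun y => indicator diagonal_pairs (Node x y)) = 0.
Proof.
  destruct (classic (exists n, large_coded n x = true)) as [[n Hn] | Hno].
  - rewrite (mean_ext _ _ (indicator (large_coded n))).
    + apply uf_lim_eq; auto; apply uf_converges_eventually; auto.
      apply (uf_mono U hU _ _ (uf_tail U hU hpos hidem n)); intros m Hm.
      apply coded_mean_large_coded_other; lia.
    + intros y; unfold indicator; simpl.
      destruct excluded_middle_informative as [[m [Hm Hmy]] | Hnot].
      * rewrite (large_coded_unique n m x Hn Hm), Hmy; reflexivity.
      * destruct (large_coded n y) eqn:Hy; [exfalso; eauto | reflexivity].
  - rewrite (mean_ext _ _ (fun _ => 0)); [apply (mean_const _ is_mean_coded_limit) |].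
    intros y; unfold indicator; simpl.
    destruct excluded_middle_informative as [[m [Hm _]] | _]; [exfalso; eauto | reflexivity].
Qed.

Lemma coded_limit_not_idem : ~ idem coded_limit.
Proof.
  intros [_ Hid]; specialize (Hid _ (bounded_indicator diagonal_pairs)); unfold conv in Hid.
  rewrite (mean_ext _ _ (fun _ => 0)), (mean_const _ is_mean_coded_limit), coded_limit_diagonal in Hid;
    [lra | apply coded_limit_section_null].
Qed.

Lemma idempotents_not_wclosed : ~ wclosed (fun lam => in_AU U lam /\ idem lam).
Proof.
  intros Hcl; apply coded_limit_not_idem; unfold coded_limit.
  apply (wclosed_mean_ulim U hU _ (fun n => proj1 (proj1 (coded_mean_in_AU_idem _))) _ Hcl).
  intros n; apply coded_mean_in_AU_idem.
Qed.

End Construction.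

Theorem proposition6p2 (U : (nat -> Prop) -> Prop)
  (hU : is_ultrafilter U) (hN : U (fun n => (0 < n)%nat))
  (hidem : uf_idempotent U) :
  ((exists mu, in_AU U mu /\ idem mu) ->
    exists (mu : (nat -> bool) -> (tree -> R) -> R) (E : (nat -> bool) -> tree -> bool),
      (forall r, in_AU U (mu r) /\ idem (mu r)) /\
      (forall r, mu r (indicator (E r)) = 1) /\
      (forall r s, r <> s -> mu r (indicator (E s)) = 0)) /\
  ((forall mu, ~ (in_AU U mu /\ idem mu)) \/
   ~ wclosed (fun mu => in_AU U mu /\ idem mu)).
Proof.
  split.
  - intros [mu [Hmu Hmu_idem]].
    exists (coded_mean U mu), (coded_set U); split; [| split].
    + intros r; apply coded_mean_in_AU_idem; auto.
    + intros r; apply coded_mean_full; auto.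
    + intros r s Hrs; apply coded_mean_null; auto.
  - destruct (classic (exists mu, in_AU U mu /\ idem mu)) as [[mu [Hmu Hmu_idem]] | Hnone].
    + right; eapply idempotents_not_wclosed; eauto.
    + left; intros mu Hmu; apply Hnone; eauto.
Qed.
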